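(* Let $x_1,x_2,x_3>0$, $\gamma,\delta>0$ with $\gamma\ne1\ne\delta$, and let $$\mathbf{Q}=\begin{pmatrix}1&\delta x_1&x_2&x_3\\ 1/(\delta x_1)&1&x_2/x_1&x_3/x_1\\ 1/x_2&x_1/x_2&1&\gamma x_3/x_2\\ 1/x_3&x_1/x_3&x_2/(\gamma x_3)&1\end{pmatrix}$$ with principal right eigenvector $\mathbf{w}^{EM}$. Then $\delta>1$ iff $w_1^{EM}/w_2^{EM}<\delta x_1$, and $\delta<1$ iff $w_1^{EM}/w_2^{EM}>\delta x_1$.
   Context: The principal right eigenvector is the positive (Perron) eigenvector belonging to the largest eigenvalue. *)

From HB Require Import structures.
From mathcomp Require Import all_boot all_order all_algebra.
Set Implicit Arguments. Unset Strict Implicit. Unset Printing Implicit Defensive.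
Import Order.TTheory GRing.Theory Num.Theory.
Local Open Scope ring_scope.

(* The 4x4 pairwise comparison matrix Q of the statement (indices 0..3 stand
   for 1..4 in the paper). *)
Definition Qentry (R : realFieldType) (x1 x2 x3 g d : R) (i j : nat) : R :=
  match i, j with
  | 0, 0 => 1 | 0, 1 => d * x1 | 0, 2 => x2 | 0, 3 => x3
  | 1, 0 => (d * x1)^-1 | 1, 1 => 1 | 1, 2 => x2 / x1 | 1, 3 => x3 / x1
  | 2, 0 => x2^-1 | 2, 1 => x1 / x2 | 2, 2 => 1 | 2, 3 => g * x3 / x2
  | 3, 0 => x3^-1 | 3, 1 => x1 / x3 | 3, 2 => x2 / (g * x3) | _, _ => 1
  end.

Definition Qmx (R : realFieldType) (x1 x2 x3 g d : R) : 'M[R]_4 :=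
  \matrix_(i < 4, j < 4) Qentry x1 x2 x3 g d i j.

Definition principal_right_eigenvector (R : realFieldType) (n : nat)
    (A : 'M[R]_n) (w : 'cV[R]_n) : Prop :=
  (forall i, 0 < w i 0) /\
  exists lam : R, A *m w = lam *: w /\ (forall mu : R, eigenvalue A mu -> mu <= lam).

(** Only the first two eigenvector equations matter.  Subtracting [d x1] times
    row 2 of [Q w = lam w] from row 1 gives
      [lam (w1 - d x1 w2) = (1 - d) (x2 w3 + x3 w4)],
    and [lam > 0] for a positive eigenvector of a positive matrix, so
    [w1 - d x1 w2] has the sign of [1 - d]. *)

From HB Require Import structures.
From mathcomp Require Import all_boot all_order all_algebra.
From mathcomp Require Import ring.
Set Implicit Arguments. Unset Strict Implicit. Unset Printing Implicit Defensive.
Import Order.TTheory GRing.Theory Num.Theory.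
Local Open Scope ring_scope.

Lemma eigenvalue_gt0_pos_eigenvector (R : numFieldType) (n : nat)
    (A : 'M[R]_n.+1) (w : 'cV[R]_n.+1) (lam : R) :
  (forall i j, 0 < A i j) -> (forall i, 0 < w i 0) ->
  A *m w = lam *: w -> 0 < lam.
Proof.
move=> A_gt0 w_gt0 Aw; rewrite -(pmulr_lgt0 _ (w_gt0 0)).
have -> : lam * w 0 0 = \sum_j A 0 j * w j 0.
  by have := congr1 (fun M : 'cV[R]_n.+1 => M 0 0) Aw; rewrite !mxE => ->.
rewrite big_ord_recl ltr_wpDr ?mulr_gt0 //.
by apply: sumr_ge0 => j _; rewrite ltW ?mulr_gt0.
Qed.

Lemma sum_ord4 (R : nmodType) (F : 'I_4 -> R) :
  \sum_(j < 4) F j = F 0 + F 1 + F 2 + F 3.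
Proof.
by rewrite !big_ord_recl big_ord0 addr0 !addrA; congr (_ + _ + _ + _);
  congr F; apply: val_inj.
Qed.

Section ComparisonMatrix.

Variables (R : realFieldType) (x1 x2 x3 g d : R).
Hypotheses (x1_gt0 : 0 < x1) (x2_gt0 : 0 < x2) (x3_gt0 : 0 < x3)
  (g_gt0 : 0 < g) (d_gt0 : 0 < d).

Lemma Qmx_gt0 (i j : 'I_4) : 0 < Qmx x1 x2 x3 g d i j.
Proof.
rewrite mxE; case: i j => [[|[|[|[|i]]]] ?] [[|[|[|[|j]]]] ?] //=;
  by rewrite ?(mulr_gt0, divr_gt0, invr_gt0).
Qed.

Lemma Qmx_eigen_row01 (w : 'cV[R]_4) (lam : R) :
  Qmx x1 x2 x3 g d *m w = lam *: w ->
  lam * (w 0 0 - d * x1 * w 1 0) = (1 - d) * (x2 * w 2 0 + x3 * w 3 0).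
Proof.
move=> Qw; have row i := congr1 (fun M : 'cV[R]_4 => M i 0) Qw.
move: (row 0) (row 1); rewrite /= !mxE !sum_ord4 !mxE /= => row0 row1.
have x1_neq0 : x1 != 0 by rewrite gt_eqF.
have d_neq0 : d != 0 by rewrite gt_eqF.
rewrite mulrBr mulrCA -row0 -row1; field; exact/andP.
Qed.

End ComparisonMatrix.

Lemma ratio_lt_iff_sign (R : realFieldType) (a b c d t : R) :
  0 < b -> 0 < t -> a - c * b = (1 - d) * t ->
  ((1 < d) = (a / b < c)) /\ ((d < 1) = (c < a / b)).
Proof.
move=> b_gt0 t_gt0 defect.
rewrite ltr_pdivrMr // ltr_pdivlMr //.
rewrite -[a < c * b]subr_lt0 -[c * b < a]subr_gt0 defect.
by rewrite pmulr_llt0 // pmulr_lgt0 // subr_lt0 subr_gt0.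
Qed.

Theorem mainTheorem11 (R : realFieldType) (x1 x2 x3 g d : R)
  (hx1 : 0 < x1) (hx2 : 0 < x2) (hx3 : 0 < x3) (hg : 0 < g) (hd : 0 < d)
  (hg1 : g != 1) (hd1 : d != 1) (w : 'cV[R]_4)
  (hw : principal_right_eigenvector (Qmx x1 x2 x3 g d) w) :
  (1 < d <-> w 0 0 / w 1 0 < d * x1) /\ (d < 1 <-> d * x1 < w 0 0 / w 1 0).
Proof.
case: hw => w_gt0 [lam [Qw _]].
have lam_gt0 : 0 < lam.
  exact: eigenvalue_gt0_pos_eigenvector (Qmx_gt0 hx1 hx2 hx3 hg hd) w_gt0 Qw.
have defect := Qmx_eigen_row01 hx1 hd Qw.
have [] := @ratio_lt_iff_sign _ (w 0 0) (w 1 0) (d * x1) d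
  ((x2 * w 2 0 + x3 * w 3 0) / lam) (w_gt0 1).
- by rewrite divr_gt0 // addr_gt0 // mulr_gt0.
- by rewrite mulrA -defect [RHS]mulrC mulKf ?gt_eqF.
by move=> -> ->.
Qed.
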